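(* Let $p\neq 2$ be a prime and $G=Z_{p^{\lambda_1}}\times\cdots\times Z_{p^{\lambda_n}}$ with $\lambda_1\le\cdots\le\lambda_n$. Then for any $i\in\{1,\dots,n\}$, $\mathrm{Char}(G)\cong\mathrm{Char}(G\times Z_{p^{\lambda_i}})$.
   Context: $\mathrm{Char}(G)$ denotes the lattice of characteristic subgroups of $G$. *)

From mathcomp Require Import all_boot all_fingroup all_solvable all_algebra.
Set Implicit Arguments. Unset Strict Implicit. Unset Printing Implicit Defensive.
Import GroupScope.

Definition Char (gT : finGroupType) (G : {group gT}) : {set {group gT}} :=
  [set H : {group gT} | H \char G].

(* Lattice isomorphism Char(G) ~= Char(K): a bijection from Char(G) onto
   Char(K) that preserves and reflects inclusion (an order isomorphism of
   lattices, which is the same as a lattice isomorphism). *)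
Definition char_lattice_iso (gT hT : finGroupType)
    (G : {group gT}) (K : {group hT}) : Prop :=
  exists f : {group gT} -> {group hT},
    {in Char G &, forall A B, (f A \subset f B) = (A \subset B)} /\
    f @: Char G = Char K.

From mathcomp Require Import all_boot all_fingroup all_solvable all_algebra.
Set Implicit Arguments. Unset Strict Implicit. Unset Printing Implicit Defensive.
Import GroupScope.

(* In an abelian p-group G with p odd, characteristic subgroups are fully
   invariant.  Indeed an endomorphism e is the product of the e \o pi_j, where
   pi_j projects onto the j-th cyclic factor and acts there as a power map
   z |-> z ^+ c; as p cannot divide both c + 1 and 2c + 1, one of the maps
   y |-> y * (e \o pi_j) y ^+ k, k = 1, 2, is an injective endomorphism, hence
   preserves every characteristic H, and since |G| is odd this puts
   (e \o pi_j) h in H for h in H.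
   Now embed C = Z_(p^lam_i) in G by phi onto the i-th factor, with retraction
   psi.  Full invariance makes H x phi^-1(H) characteristic in G x C for every
   characteristic H of G.  Conversely a characteristic K of G x C is
   H x phi^-1(H) for its slice H = {a | (a, 1) in K}: K is stable under
   (a, c) |-> (a^-1, c), giving (a^2, 1) in K from (a, c) in K, and under the
   swap (a, c) |-> (a * phi (psi a)^-1 * phi c, psi a), which exchanges (phi c, 1)
   and (1, c). *)

Section HomomorphismsIntoAbelian.
Variables (gT rT : finGroupType) (D : {set gT}).
Implicit Types (f g : gT -> rT).

Lemma in_morph1 (G : {group gT}) f : {in G &, {morph f : x y / x * y}} -> f 1 = 1.
Proof. by move=> fM; apply: (mulgI (f 1)); rewrite -fM ?mulg1. Qed.

Lemma in_morphX (G : {group gT}) f x n :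
  {in G &, {morph f : x y / x * y}} -> x \in G -> f (x ^+ n) = f x ^+ n.
Proof. by move=> fM; apply: (morphX (morphm_morphism (introT morphicP fM))). Qed.

Lemma in_morph_prod (G : {group gT}) f (I : finType) (P : pred I) (F : I -> gT) :
    {in G &, {morph f : x y / x * y}} -> (forall i, P i -> F i \in G) ->
  f (\prod_(i | P i) F i) = \prod_(i | P i) f (F i).
Proof. by move=> fM; apply: (morph_prod (morphm_morphism (introT morphicP fM))). Qed.

Variable A : {group rT}.
Hypothesis abA : abelian A.

Lemma abelian_morphM_mul f g :
    {in D, forall x, f x \in A} -> {in D, forall x, g x \in A} ->
    {in D &, {morph f : x y / x * y}} -> {in D &, {morph g : x y / x * y}} ->
  {in D &, {morph (fun x => f x * g x) : x y / x * y}}.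
Proof.
move=> fA gA fM gM x y Dx Dy /=; rewrite fM // gM // !mulgA; congr (_ * _).
by rewrite -!mulgA (centsP abA (g x)) ?fA ?gA.
Qed.

Lemma abelian_morphM_inv f :
    {in D, forall x, f x \in A} -> {in D &, {morph f : x y / x * y}} ->
  {in D &, {morph (fun x => (f x)^-1) : x y / x * y}}.
Proof. by move=> fA fM x y Dx Dy /=; rewrite fM // invMg (centsP abA) ?groupV ?fA. Qed.

Lemma abelian_morphM_expg f n :
    {in D, forall x, f x \in A} -> {in D &, {morph f : x y / x * y}} ->
  {in D &, {morph (fun x => f x ^+ n) : x y / x * y}}.
Proof.
by move=> fA fM x y Dx Dy /=; rewrite fM // expgMn //; apply: (centsP abA); rewrite ?fA.
Qed.

End HomomorphismsIntoAbelian.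

Section CharacteristicSubgroups.
Variable gT : finGroupType.
Implicit Types (G H K : {group gT}) (u : gT -> gT).

Definition fully_invariant (G H : {set gT}) :=
  forall e : gT -> gT, {in G &, {morph e : x y / x * y}} ->
  {in G, forall x, e x \in G} -> {in H, forall x, e x \in H}.

Lemma char_injective_endo G K u : K \char G ->
    {in G &, {morph u : x y / x * y}} -> {in G, forall x, u x \in G} ->
    {in G, forall x, u x = 1 -> x = 1} ->
  {in K, forall x, u x \in K}.
Proof.
move=> /charP[sKG chK] uM uG u1 x Kx.
pose f := morphm_morphism (introT morphicP uM).
have injf : 'injm f.
  apply/subsetP=> y /morphpreP[Gy /set1P/u1 y1]; exact/set1P/y1.
have fG : f @* G = G.
  apply/(morphim_fixP injf _ (subxx _))/subsetP=> _ /morphimP[y _ Gy ->].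
  exact: uG.
by rewrite -(chK f injf fG); apply: mem_morphim; rewrite ?(subsetP sKG).
Qed.

Lemma aut_invariant_char G K : K \subset G ->
    (forall f : {morphism G >-> gT}, 'injm f -> f @* G = G ->
       {in K, forall x, f x \in K}) ->
  K \char G.
Proof.
move=> sKG invK; apply/charP; split=> // f injf fG.
apply/(morphim_fixP injf _ sKG)/subsetP=> _ /morphimP[x _ Kx ->]; exact: invK.
Qed.

Lemma fully_invariant_char G K : K \subset G -> fully_invariant G K -> K \char G.
Proof.
move=> sKG fiK; apply: aut_invariant_char => // f _ fG; apply: fiK; first exact: morphM.
by move=> x Gx; rewrite -[in X in _ \in X]fG mem_morphim.
Qed.

Lemma mem_sqrg_odd H x : odd #[x] -> x ^+ 2 \in H -> x \in H.
Proof.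
move=> ox; have /eqP defx : generator <[x]> (x ^+ 2).
  by rewrite generator_coprime coprimen2.
by rewrite -!cycle_subG defx.
Qed.

Lemma p_elt_expg_eq1 (p : nat) (x : gT) k :
  p.-elt x -> coprime k p -> x ^+ k = 1 -> x = 1.
Proof.
move=> /p_natP[m om] cokp /eqP; rewrite -order_dvdn => xk.
have : coprime #[x] k by rewrite om coprimeXl // coprime_sym.
by rewrite /coprime (gcdn_idPl xk) order_eq1 => /eqP.
Qed.

Lemma abelian_bigdprod (I : finType) (P : pred I) (F : I -> {set gT}) G :
  \big[dprod/1]_(i | P i) F i = G -> (forall i, P i -> abelian (F i)) -> abelian G.
Proof.
move=> + abF; elim/big_rec: _ G => [G <- | i B Pi IH G defG]; first exact: abelian1.
have [[K H defK defH] <- cFB _] := dprodP defG.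
by rewrite defK defH abelianM (IH H defH) -defK -defH cFB abF.
Qed.

End CharacteristicSubgroups.

Section CyclicDecomposition.
Variables (gT : finGroupType) (I : finType) (x : I -> gT) (G : {group gT}).
Hypothesis defG : \big[dprod/1]_i <[x i]> = G.

Definition cycle_compl j : {group gT} := << \bigcup_(k | k != j) <[x k]> >>%G.

Definition cycle_proj j := divgr <[x j]> (cycle_compl j).

Lemma cycle_sub_compl j k : k != j -> <[x k]> \subset cycle_compl j.
Proof. by move=> kj; rewrite sub_gen // (bigcup_max k). Qed.

Lemma cycle_compl_dprod j : <[x j]> \x cycle_compl j = G.
Proof.
have defGj := defG; rewrite (bigD1 j) //= in defGj.
have [[_ R _ defR] _ _ _] := dprodP defGj.
by rewrite /cycle_compl /= (bigdprodWY defR) -defR.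
Qed.

Lemma cycle_projM j : {in G &, {morph cycle_proj j : y z / y * z}}.
Proof.
have [_ defXR cXR tiXR] := dprodP (cycle_compl_dprod j); rewrite /cycle_proj.
by apply: divgrM; [apply/complP | ].
Qed.

Lemma mem_cycle_proj j y : y \in G -> cycle_proj j y \in <[x j]>.
Proof.
have [_ defXR _ _] := dprodP (cycle_compl_dprod j).
by rewrite -defXR; apply: mem_divgr.
Qed.

Lemma cycle_proj_id j y : y \in <[x j]> -> cycle_proj j y = y.
Proof. exact: divgr_id. Qed.

Lemma cycle_proj_compl j y : y \in cycle_compl j -> cycle_proj j y = 1.
Proof.
have [_ _ _ tiXR] := dprodP (cycle_compl_dprod j).
by move=> Ry; rewrite /cycle_proj -(mul1g y) divgrMid.
Qed.

Lemma cycle_sub_dprod j : <[x j]> \subset G.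
Proof. by have [_ <- _ _] := dprodP (cycle_compl_dprod j); apply: mulG_subl. Qed.

Lemma cycle_projG j y : y \in G -> cycle_proj j y \in G.
Proof. by move=> Gy; exact: subsetP (cycle_sub_dprod j) _ (mem_cycle_proj j Gy). Qed.

Lemma cycle_proj_prod y : y \in G -> \prod_j cycle_proj j y = y.
Proof.
move=> Gy; have [c [Xc defy _]] := mem_bigdprod defG Gy.
have projc j : cycle_proj j y = c j.
  rewrite defy (in_morph_prod (cycle_projM j)) => [|k _]; last first.
    exact: subsetP (cycle_sub_dprod k) _ (Xc k isT).
  rewrite (eq_bigr (fun k => if k == j then c k else 1)) => [|k _].
    by rewrite -big_mkcond big_pred1_eq.
  have [-> | kj] := eqVneq k j; first exact/cycle_proj_id/Xc.
  exact/cycle_proj_compl/(subsetP (cycle_sub_compl kj))/Xc.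
by rewrite {2}defy; apply: eq_bigr => j _; rewrite projc.
Qed.

Lemma abelian_cycle_dprod : abelian G.
Proof. by apply: abelian_bigdprod defG _ => i _; apply: cycle_abelian. Qed.

End CyclicDecomposition.

Lemma prime_coprime_succ_or_double p c :
  prime p -> coprime c.+1 p || coprime (c.*2).+1 p.
Proof.
move=> pP; rewrite ![coprime _ p]coprime_sym !prime_coprime // -negb_and.
apply/negP=> /andP[p_c1 p_2c1].
have : p %| (c.*2).+1 + 1 by rewrite addn1 -doubleS -mul2n dvdn_mull.
by rewrite dvdn_addr // dvdn1 => /eqP p1; rewrite p1 in pP.
Qed.

Section FullInvariance.
Variables (gT : finGroupType) (I : finType) (x : I -> gT) (G : {group gT}).
Hypothesis defG : \big[dprod/1]_i <[x i]> = G.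
Variable p : nat.
Hypotheses (pP : prime p) (p_odd : odd p) (pG : p.-group G).

Let abG := abelian_cycle_dprod defG.

Lemma cycle_proj_endo_power (e : gT -> gT) j :
    {in G &, {morph e : y z / y * z}} -> {in G, forall y, e y \in G} ->
  exists c, {in <[x j]>, forall z, cycle_proj x j (e z) = z ^+ c}.
Proof.
move=> eM eG; have Gxj : x j \in G by rewrite -cycle_subG cycle_sub_dprod.
have /cycleP[c Ec] := mem_cycle_proj defG j (eG _ Gxj).
exists c => _ /cycleP[m ->].
rewrite (in_morphX _ eM Gxj) (in_morphX _ (cycle_projM defG j)) ?eG // Ec.
by rewrite -!expgM mulnC.
Qed.

Lemma char_invariant_endo_cycle_proj (H : {group gT}) (e : gT -> gT) j :
    H \char G ->
    {in G &, {morph e : y z / y * z}} -> {in G, forall y, e y \in G} ->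
  {in H, forall h, e (cycle_proj x j h) \in H}.
Proof.
move=> chH eM eG h Hh; have Gh := subsetP (char_sub chH) h Hh.
pose d y := e (cycle_proj x j y).
have dM : {in G &, {morph d : y z / y * z}}.
  by move=> y z Gy Gz; rewrite /d (cycle_projM defG) // eM ?(cycle_projG defG).
have dG : {in G, forall y, d y \in G}.
  by move=> y Gy; rewrite eG ?(cycle_projG defG).
have [c dc] := cycle_proj_endo_power j eM eG.
have [k k12 cok] : (exists2 k : nat, (k == 1) || (k == 2) & coprime (c * k).+1 p)%N.
  by case/orP: (prime_coprime_succ_or_double c pP); [exists 1%N | exists 2%N];
     rewrite ?muln1 ?muln2.
have dhk : d h ^+ k \in H.
  rewrite -(groupMl _ Hh).
  apply: (char_injective_endo (u := fun y => y * d y ^+ k) chH) => //.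
  - apply: (abelian_morphM_mul (f := id) (g := fun y => d y ^+ k) abG) => //.
      by move=> y Gy; rewrite groupX ?dG.
    move=> y z Gy Gz /=; exact: (abelian_morphM_expg abG k dG dM Gy Gz).
  - by move=> y Gy; rewrite groupM ?groupX ?dG.
  move=> y Gy /eqP; rewrite -eq_invg_mul => /eqP dyk.
  have : cycle_proj x j y ^+ (c * k)%N.+1 = 1.
    rewrite expgS expgM -dc ?(mem_cycle_proj defG) // -/(d y) -(in_morphX _ (cycle_projM defG j)) ?dG //.
    by rewrite -dyk -(cycle_projM defG) ?groupV // mulgV (in_morph1 (cycle_projM defG j)).
  move/(p_elt_expg_eq1 (mem_p_elt pG (cycle_projG defG j Gy)) cok) => y1.
  by rewrite -[y]invgK dyk /d y1 (in_morph1 eM) expg1n invg1.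
case/orP: k12 => /eqP k_val; rewrite k_val in dhk; first by rewrite expg1 in dhk.
apply: mem_sqrg_odd dhk.
exact: dvdn_odd (order_dvdG (dG h Gh)) (odd_pgroup_odd p_odd pG).
Qed.

Theorem char_fully_invariant (H : {group gT}) : H \char G -> fully_invariant G H.
Proof.
move=> chH e eM eG h Hh; have Gh := subsetP (char_sub chH) h Hh.
rewrite -(cycle_proj_prod defG Gh) (in_morph_prod eM) => [|j _].
  by apply: group_prod => j _; apply: char_invariant_endo_cycle_proj.
exact: cycle_projG.
Qed.

End FullInvariance.

Lemma pair_morphM (gT aT cT : finGroupType) (D : {set gT})
    (f : gT -> aT) (g : gT -> cT) :
    {in D &, {morph f : x y / x * y}} -> {in D &, {morph g : x y / x * y}} ->
  {in D &, {morph (fun x => (f x, g x)) : x y / x * y}}.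
Proof. by move=> fM gM x y Dx Dy; rewrite /= fM ?gM. Qed.

Section RetractProduct.
Variables (aT cT : finGroupType) (A : {group aT}) (C : {group cT}).
Variables (phi : {morphism C >-> aT}) (psi : aT -> cT).
Hypotheses (phiA : {in C, forall c, phi c \in A}) (psiC : {in A, forall a, psi a \in C}).
Hypotheses (psiM : {in A &, {morph psi : a b / a * b}}) (psiK : {in C, cancel phi psi}).

Definition retract_lift (H : {group aT}) : {group aT * cT} :=
  (setX H (phi @*^-1 H))%G.

Lemma mem_retract_lift H a c :
  ((a, c) \in retract_lift H) = [&& a \in H, c \in C & phi c \in H].
Proof. by rewrite in_setX; congr (_ && _); apply/morphpreP/andP. Qed.

Lemma retract_lift_subset H1 H2 :
  (retract_lift H1 \subset retract_lift H2) = (H1 \subset H2).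
Proof.
apply/idP/idP => [sH12 | sH12]; last by rewrite setXS ?morphpreS.
apply/subsetP=> h H1h; have : (h, 1) \in retract_lift H1.
  by rewrite mem_retract_lift H1h group1 morph1 group1.
by move/(subsetP sH12); rewrite mem_retract_lift => /andP[].
Qed.

Lemma fully_invariant_retract_lift (H : {group aT}) :
    H \subset A -> fully_invariant A H ->
  fully_invariant (setX A C) (retract_lift H).
Proof.
move=> sHA fiH th thM thAC.
have th_lift (m : aT -> aT * cT) :
    {in A &, {morph m : a b / a * b}} -> {in A, forall a, m a \in setX A C} ->
  {in H, forall h, th (m h) \in retract_lift H}.
- move=> mM mAC h Hh; have thmAC a : a \in A -> th (m a) \in setX A C.
    by move=> Aa; apply/thAC/mAC.
  have thmA a : a \in A -> (th (m a)).1 \in A by move/thmAC; rewrite inE => /andP[].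
  have thmC a : a \in A -> (th (m a)).2 \in C by move/thmAC; rewrite inE => /andP[].
  have fstM : {in A &, {morph (fun a => (th (m a)).1) : a b / a * b}}.
    by move=> a b Aa Ab; rewrite /= mM // thM ?mAC.
  have sndM : {in A &, {morph (fun a => phi (th (m a)).2) : a b / a * b}}.
    by move=> a b Aa Ab; rewrite /= mM // thM ?mAC // -morphM ?thmC.
  have := fiH _ sndM (fun a Aa => phiA (thmC a Aa)) h Hh.
  have := fiH _ fstM thmA h Hh.
  have := thmC h (subsetP sHA h Hh).
  by case: (th (m h)) => a c /= Cc Ha Hphic; rewrite mem_retract_lift Ha Cc.
move=> [a c]; rewrite mem_retract_lift => /and3P[Ha Cc Hphic].
have Aa := subsetP sHA a Ha.
have -> : (a, c) = (a, 1) * (1, psi (phi c)).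
  by rewrite -[RHS]/(a * 1, 1 * _) mulg1 mul1g psiK.
have ACa1 : (a, 1) \in setX A C by rewrite in_setX Aa group1.
have AC1c : (1, psi (phi c)) \in setX A C by rewrite in_setX group1 psiC ?phiA.
rewrite thM //; apply: groupM.
  apply: (th_lift _ (in2W (@pairg1_morphM aT cT)) _ a Ha) => b Ab.
  by rewrite in_setX Ab group1.
have m1M : {in A &, {morph (fun b => (1 : aT, psi b)) : b1 b2 / b1 * b2}}.
  by move=> b1 b2 Ab1 Ab2; rewrite /= psiM // -[RHS]/(1 * 1, _) mulg1.
apply: (th_lift _ m1M _ (phi c) Hphic) => b Ab.
by rewrite in_setX group1 psiC.
Qed.

Lemma retract_lift_char (H : {group aT}) :
  fully_invariant A H -> H \char A -> retract_lift H \char setX A C.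
Proof.
move=> fiH chH; have sHA := char_sub chH.
apply: fully_invariant_char; last exact: fully_invariant_retract_lift.
by rewrite setXS ?morphpre_sub.
Qed.

Definition retract_slice (K : {group aT * cT}) : {group aT} :=
  (pairg1 cT @*^-1 K)%G.

Lemma mem_retract_slice K a : (a \in retract_slice K) = ((a, 1) \in K).
Proof. by rewrite !inE. Qed.

Hypotheses (abA : abelian A) (oddA : odd #|A|).

Section CharacteristicSlice.
Variable K : {group aT * cT}.
Hypothesis chK : K \char setX A C.

Let memKAC a c : (a, c) \in K -> a \in A /\ c \in C.
Proof. by move/(subsetP (char_sub chK)); rewrite in_setX => /andP. Qed.

Lemma retract_slice_char : retract_slice K \char A.
Proof.
apply: aut_invariant_char => [|f injf fA a].
  by apply/subsetP => a; rewrite mem_retract_slice => /memKAC[].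
have fAA b : b \in A -> f b \in A by move=> Ab; rewrite -[in X in _ \in X]fA mem_morphim.
rewrite !mem_retract_slice => Ka1.
pose u (k : aT * cT) := (f k.1, k.2).
have uM : {in setX A C &, {morph u : k l / k * l}}.
  apply: pair_morphM => // -[b c] [b' c'].
  by rewrite !in_setX => /andP[Ab _] /andP[Ab' _] /=; rewrite morphM.
have uAC : {in setX A C, forall k, u k \in setX A C}.
  by move=> [b c]; rewrite !in_setX => /andP[/fAA-> ->].
have u1 : {in setX A C, forall k, u k = 1 -> k = 1}.
  move=> [b c]; rewrite in_setX => /andP[Ab _] [fb1 ->]; congr (_, _).
  by apply: (injmP injf) => //; rewrite fb1 morph1.
exact: char_injective_endo chK uM uAC u1 _ Ka1.
Qed.

Lemma char_retract_swap a c : (a, c) \in K ->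
  (a * (phi (psi a))^-1 * phi c, psi a) \in K.
Proof.
pose sw (k : aT * cT) := (k.1 * (phi (psi k.1))^-1 * phi k.2, psi k.1).
have AC_A (k : aT * cT) : k \in setX A C -> k.1 \in A by rewrite inE => /andP[].
have AC_C (k : aT * cT) : k \in setX A C -> k.2 \in C by rewrite inE => /andP[].
have phipsiA k : k \in setX A C -> phi (psi k.1) \in A by move/AC_A/psiC/phiA.
have phipsiM :
    {in setX A C &, {morph (fun k : aT * cT => (phi (psi k.1))^-1) : k l / k * l}}.
  apply: (abelian_morphM_inv abA phipsiA) => k l /AC_A Ak /AC_A Al.
  by rewrite /= psiM // morphM ?psiC.
have sw1M :
    {in setX A C &, {morph (fun k : aT * cT => k.1 * (phi (psi k.1))^-1) : k l / k * l}}.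
  apply: (abelian_morphM_mul (f := fun k : aT * cT => k.1) abA AC_A) => // k /phipsiA.
  by rewrite groupV.
have phiM : {in setX A C &, {morph (fun k : aT * cT => phi k.2) : k l / k * l}}.
  by move=> k l /AC_C Ck /AC_C Cl; rewrite /= morphM.
have swM : {in setX A C &, {morph sw : k l / k * l}}.
  apply: pair_morphM => [|k l /AC_A Ak /AC_A Al]; last exact: psiM.
  apply: (abelian_morphM_mul abA _ _ sw1M phiM) => [k ACk|k /AC_C/phiA //].
  by rewrite groupM ?groupV ?AC_A ?phipsiA.
apply: (char_injective_endo (u := sw) chK swM) => [[b d]|[b d]].
  by rewrite !in_setX => /andP[Ab Cd] /=; rewrite psiC ?groupM ?groupV ?phiA ?psiC.
rewrite in_setX => /andP[Ab Cd] [eq1 eq2]; rewrite eq2 morph1 invg1 mulg1 in eq1.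
have eb : b = (phi d)^-1 by apply: (mulIg (phi d)); rewrite mulVg.
have d1 : d = 1.
  by apply: invg_inj; rewrite invg1 -[d^-1]psiK ?groupV // morphV // -eb.
by rewrite eb d1 morph1 invg1.
Qed.

Lemma mem_retract_slice_pair a c : (a, c) \in K -> a \in retract_slice K.
Proof.
move=> Kac; have [Aa _] := memKAC Kac.
have inv1M : {in setX A C &, {morph (fun k : aT * cT => (k.1^-1, k.2)) : k l / k * l}}.
  apply: pair_morphM => // -[b d] [b' d']; rewrite !in_setX => /andP[Ab _] /andP[Ab' _].
  by rewrite /= invMg (centsP abA) ?groupV.
have Kac' : (a^-1, c) \in K.
  apply: (char_injective_endo chK inv1M _ _ Kac) => [[b d]|[b d]].
    by rewrite !in_setX groupV.
  by rewrite in_setX => /andP[Ab _] [/eqP]; rewrite invg_eq1 => /eqP-> ->.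
apply: mem_sqrg_odd (dvdn_odd (order_dvdG Aa) oddA) _.
have := groupM Kac (groupVr Kac').
by rewrite -[_ * _]/(a * a^-1^-1, c * c^-1) invgK mulgV mem_retract_slice expgS expg1.
Qed.

Lemma retract_lift_slice : retract_lift (retract_slice K) = K.
Proof.
apply/val_inj/setP => -[a c]; rewrite mem_retract_lift !mem_retract_slice.
apply/and3P/idP => [[Ka1 Cc Kphic1] | Kac].
  have := char_retract_swap Kphic1; rewrite psiK // morph1 mulgV mul1g => K1c.
  have -> : (a, c) = (a, 1) * (1, c) by rewrite -[RHS]/(a * 1, 1 * c) mulg1 mul1g.
  exact: groupM.
have Ka1 := mem_retract_slice_pair Kac; rewrite mem_retract_slice in Ka1.
have K1c : (1, c) \in K.
  have -> : (1, c) = (a, 1)^-1 * (a, c).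
    by rewrite -[RHS]/(a^-1 * a, 1^-1 * c) mulVg invg1 mul1g.
  by rewrite groupM ?groupV.
have [_ Cc] := memKAC Kac.
have := char_retract_swap K1c; rewrite (in_morph1 psiM) morph1 invg1 !mul1g.
by rewrite Ka1 Cc => ->.
Qed.

End CharacteristicSlice.

Hypothesis charA_fully_invariant :
  forall H : {group aT}, H \char A -> fully_invariant A H.

Theorem retract_char_lattice_iso : char_lattice_iso A (setX A C)%G.
Proof.
exists retract_lift; split=> [H1 H2 _ _ | ]; first exact: retract_lift_subset.
apply/setP=> K; rewrite inE; apply/imsetP/idP => [[H] | chK].
  by rewrite inE => chH ->; apply: retract_lift_char (charA_fully_invariant chH) chH.
by exists (retract_slice K); rewrite ?inE ?retract_slice_char ?retract_lift_slice.
Qed.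

End RetractProduct.

Unset Implicit Arguments.

Theorem mainTheorem8 (p n : nat) (lam : 'I_n -> nat)
    (gT : finGroupType) (G : {group gT}) (x : 'I_n -> gT) (i : 'I_n) :
  prime p -> p != 2 ->
  (forall j, 0 < lam j) ->
  (forall j k : 'I_n, j <= k -> lam j <= lam k) ->
  (forall j, #[x j] = (p ^ lam j)%N) ->
  \big[dprod/1]_(j < n) <[x j]> = G ->
  char_lattice_iso G (setX G (Zp (p ^ lam i)%N))%G.
Proof.
move=> pP p_neq2 _ _ ox defG.
have p_odd : odd p by case: (even_prime pP) => // p2; rewrite p2 in p_neq2.
have pG : p.-group G.
  rewrite /pgroup -(bigdprod_card defG); apply: (big_ind (pnat p)) => // [m1 m2|j _].
    by rewrite pnatM => ->.
  by rewrite -orderE ox pnatX pnat_id.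
have Xi : <[x i]> \subset G := cycle_sub_dprod defG i.
rewrite -(ox i); apply: (retract_char_lattice_iso (phi := Zpm (a := x i))
  (psi := fun y => invm (injm_Zpm (x i)) (cycle_proj x i y))).
- by move=> c _; rewrite (subsetP Xi) ?mem_cycle.
- move=> y Gy /=; have : cycle_proj x i y \in Zpm @* Zp #[x i].
    by rewrite im_Zpm (mem_cycle_proj defG).
  by case/morphimP=> c _ Zc ->; rewrite invmE.
- move=> y z Gy Gz /=; rewrite (cycle_projM defG) // morphM //= im_Zpm;
  exact: (mem_cycle_proj defG).
- by move=> c Zc /=; rewrite cycle_proj_id ?invmE ?mem_cycle.
- exact: abelian_cycle_dprod defG.
- exact: odd_pgroup_odd p_odd pG.
move=> H chH; exact: (char_fully_invariant defG pP p_odd pG chH).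
Qed.
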